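(* Consider a generalized cluster pattern with principal coefficients at $t_0$, and let $t\in\mathbb T_n$ be arbitrary. Then: (1) For $i\neq k$ in $[1,n]$, the entries $c^{(i)}_{(k,l),j}$ of $C^{(i)}_t$ with $l\in[1,r_k]$, $j\in[1,r_i]$ are all equal (independent of $l$ and $j$). (2) For each $i$, there are an integer $c$ and a sign $\epsilon\in\{1,-1\}$ such that $c^{(i)}_{(i,l),l}=c+\epsilon$ for all $l\in[1,r_i]$ and $c^{(i)}_{(i,l),j}=c$ for all $l\neq j$ in $[1,r_i]$.
   Context: A semifield $(\mathbb P,\oplus,\cdot)$ is a torsion-free multiplicative abelian group with a commutative, associative binary operation $\oplus$ over which multiplication distributes. For $p\in\mathbb P$ put $p^+=p/(p\oplus1)$, $p^-=1/(p\oplus1)$. The tropical semifield $\mathrm{Trop}(s_a\mid a\in I')$ ($I'$ finite) is the free abelian group on the $s_a$ with $\prod_a s_a^{a_a}\oplus\prod_a s_a^{b_a}=\prod_a s_a^{\min(a_a,b_a)}$. For skew-symmetrizable $B\in\mathrm{Mat}_{n\times n}(\mathbb Z)$, $\mu_k(B)$ denotes Fomin–Zelevinsky matrix mutation. Generalized labeled seed: fix positive integers $r_1,\dots,r_n$; a seed $\Sigma=(\mathbf x,\mathbf p,B)$ has $B$ skew-symmetrizable with $i$-th column divisible by $r_i$, coefficients $\mathbf p_i=(p_{i,1},\dots,p_{i,r_i})\in\mathbb P^{r_i}$, and cluster $\mathbf x$. With $\beta_{ij}=b_{ij}/r_j$, $p_{k;\pm}=\prod_{l=1}^{r_k}p_{k,l}^{\pm}$,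 the coefficient part of the mutation $\mu_k$ is: $B'=\mu_k(B)$, $p'_{k,j}=p_{k,j}^{-1}$, and for $i\neq k$: $p'_{i,j}=p_{i,j}p_{k;-}^{\beta_{ki}}$ if $\beta_{ik}>0$, $p'_{i,j}=p_{i,j}p_{k;+}^{\beta_{ki}}$ if $\beta_{ik}\le 0$ (the cluster mutates by $x'_k=x_k^{-1}\prod_l(p_{k,l}^+\prod_{b_{ik}>0}x_i^{\beta_{ik}}+p_{k,l}^-\prod_{b_{ik}<0}x_i^{-\beta_{ik}})$, $x'_i=x_i$ otherwise). A cluster pattern assigns seeds $\Sigma_t$ to vertices of the $n$-regular tree $\mathbb T_n$ with edges labeled $1,\dots,n$, adjacent seeds along a $k$-edge related by $\mu_k$; coefficients of $\Sigma_t$ are written $p_{i,j;t}$. Principal coefficients at $t_0$: $\mathbb P=\mathrm{Trop}(p_{i,j}\mid i\in[1,n],j\in[1,r_i])$ and $\Sigma_{t_0}$ has coefficients $\mathbf p_i=(p_{i,1},\dots,p_{i,r_i})$. Let $I'=\{(k,l):k\in[1,n],l\in[1,r_k]\}$ and $p_{(k,l)}=p_{k,l}$. For each $t$ and $i$, define $C^{(i)}_t=(c^{(i)}_{a,j})_{a\in I',j\in[1,r_i]}\in\mathrm{Mat}_{|I'|\times r_i}(\mathbb Z)$ by $p_{i,j;t}=\prod_{a\in I'}p_a^{c^{(i)}_{a,j}}$. *)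

From mathcomp Require Import all_boot all_order all_algebra.
Set Implicit Arguments. Unset Strict Implicit. Unset Printing Implicit Defensive.
Import Order.TTheory GRing.Theory Num.Theory.
Local Open Scope ring_scope.

(* Index set I' = {(k,l) : k in [1,n], l in [1,r_k]} (0-based here). *)
Definition Iprime (n : nat) (r : 'I_n -> nat) := {k : 'I_n & 'I_(r k)}.

Definition idx (n : nat) (r : 'I_n -> nat) (k : 'I_n) (l : 'I_(r k)) : Iprime r :=
  existT (fun k => 'I_(r k)) k l.

(* An element of Trop(p_a | a in I') is written multiplicatively as
   prod_a p_a^{e a}; we store the exponent vector e : I' -> int.
   Multiplication = addition of exponents, (+) = componentwise min. *)
Definition trop (n : nat) (r : 'I_n -> nat) := Iprime r -> int.

Definition coeffs (n : nat) (r : 'I_n -> nat) := forall i : 'I_n, 'I_(r i) -> trop r.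

(* In the tropical semifield: p^+ = p/(p(+)1) has exponents max(e,0),
   p^- = 1/(p(+)1) has exponents max(-e,0). *)
Definition trop_plus n (r : 'I_n -> nat) (x : trop r) : trop r :=
  fun a => Num.max (x a) 0.
Definition trop_minus n (r : 'I_n -> nat) (x : trop r) : trop r :=
  fun a => Num.max (- x a) 0.

Definition pk_plus n (r : 'I_n -> nat) (p : coeffs r) (k : 'I_n) : trop r :=
  fun a => \sum_(l < r k) trop_plus (p k l) a.
Definition pk_minus n (r : 'I_n -> nat) (p : coeffs r) (k : 'I_n) : trop r :=
  fun a => \sum_(l < r k) trop_minus (p k l) a.

Definition beta n (r : 'I_n -> nat) (B : 'M[int]_n) (i j : 'I_n) : int :=
  (B i j %/ (r j)%:Z)%Z.

Definition mut_mat n (k : 'I_n) (B : 'M[int]_n) : 'M[int]_n :=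
  \matrix_(i, j)
    if (i == k) || (j == k) then - B i j
    else B i j + Num.max (B i k) 0 * Num.max (B k j) 0
               - Num.max (- B i k) 0 * Num.max (- B k j) 0.

Definition mut_coeff n (r : 'I_n -> nat) (B : 'M[int]_n) (p : coeffs r) (k : 'I_n)
  : coeffs r :=
  fun i j a =>
    if i == k then - p i j a
    else if 0 < beta r B i k then p i j a + beta r B k i * pk_minus p k a
    else p i j a + beta r B k i * pk_plus p k a.

Definition mut_step n (r : 'I_n -> nat) (s : 'M[int]_n * coeffs r) (k : 'I_n)
  : 'M[int]_n * coeffs r :=
  (mut_mat k s.1, @mut_coeff n r s.1 s.2 k).

(* The seed at the vertex t of T_n reached from t0 along edges labelled
   ks = [k1; ...; km] (in this order). *)
Definition seed_at n (r : 'I_n -> nat) (B0 : 'M[int]_n) (p0 : coeffs r)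
  (ks : seq 'I_n) : 'M[int]_n * coeffs r :=
  foldl (@mut_step n r) (B0, p0) ks.

(* principal coefficients: p_{i,j} at t0 is the generator p_{(i,j)} *)
Definition principal n (r : 'I_n -> nat) : coeffs r :=
  fun i j a => if (projT1 a == i) && (val (projT2 a) == val j) then 1 else 0.

(* c^{(i)}_{a,j} at t: exponent of p_a in p_{i,j;t} *)
Definition Cmat n (r : 'I_n -> nat) (B0 : 'M[int]_n) (ks : seq 'I_n)
  (i : 'I_n) (a : Iprime r) (j : 'I_(r i)) : int :=
  (@seed_at n r B0 (@principal n r) ks).2 i j a.

Definition skew_symmetrizable n (B : 'M[int]_n) : Prop :=
  exists d : 'I_n -> int, (forall i, 0 < d i) /\
    (forall i j, d i * B i j = - (d j * B j i)).

From mathcomp Require Import all_boot all_order all_algebra.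
Import Order.TTheory GRing.Theory Num.Theory.
Local Open Scope ring_scope.
Set Implicit Arguments. Unset Strict Implicit. Unset Printing Implicit Defensive.

(* Every coefficient row along the pattern keeps the shape of the principal
   row up to a sign and a shift: p_{i,j;t} has exponent vector
   [w + eps * e_(i,j)], where [w] only depends on the block [k] of an index
   [(k,l)] and [eps = +-1].  The
   row [p_k] is therefore symmetric in [l], so [p_{k;+}] and [p_{k;-}], being
   sums over [l] of a function of [p_{k,l}], are block-constant too; mutation
   only negates row [k] and shifts the other rows by block-constant vectors,
   which preserves the shape.  Reading the shape off at [t] gives both claims;
   no property of the exchange matrices is needed. *)

Section Shape.

Variables (n : nat) (r : 'I_n -> nat).

Definition block_const (w : trop r) : Prop :=
  forall a b : Iprime r, projT1 a = projT1 b -> w a = w b.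

Definition shaped_row (p : coeffs r) (i : 'I_n) : Prop :=
  exists (w : trop r) (eps : int), [/\ eps = 1 \/ eps = -1, block_const w &
    forall j a, p i j a = w a + eps * principal j a].

Definition shaped (p : coeffs r) : Prop := forall i, shaped_row p i.

Lemma principal_shaped : shaped (@principal n r).
Proof.
move=> i; exists (fun=> 0), 1; split; [by left | by [] |].
by move=> j a; rewrite add0r mul1r.
Qed.

Lemma sum_principal (V : nmodType) (G : int -> V) (k : 'I_n) (a : Iprime r) :
  \sum_(l < r k) G (principal l a) =
  if projT1 a == k then G 1 + G 0 *+ (r k).-1 else G 0 *+ r k.
Proof.
rewrite /principal; case: a => k' m /=.
case: eqVneq => [<- | nek] /=; last by rewrite sumr_const card_ord.
rewrite (bigD1 m) //= eqxx; congr (_ + _).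
rewrite (eq_bigr (fun=> G 0)) => [|l neml]; last first.
  by rewrite eq_sym (inj_eq val_inj) (negbTE neml).
by rewrite sumr_const cardC1 card_ord.
Qed.

Lemma block_const_row_sum (p : coeffs r) (k : 'I_n) (F : int -> int) :
  shaped_row p k -> block_const (fun a => \sum_(l < r k) F (p k l a)).
Proof.
move=> [w [eps [_ hw hp]]] a b hab /=.
under eq_bigr do rewrite hp; under [RHS]eq_bigr do rewrite hp.
rewrite (sum_principal (fun x => F (w a + eps * x))).
rewrite (sum_principal (fun x => F (w b + eps * x))).
by rewrite hab (hw _ _ hab).
Qed.

Lemma block_const_pk_plus (p : coeffs r) (k : 'I_n) :
  shaped_row p k -> block_const (pk_plus p k).
Proof. exact: (block_const_row_sum (fun x => Num.max x 0)). Qed.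

Lemma block_const_pk_minus (p : coeffs r) (k : 'I_n) :
  shaped_row p k -> block_const (pk_minus p k).
Proof. exact: (block_const_row_sum (fun x => Num.max (- x) 0)). Qed.

Lemma shaped_mut (B : 'M[int]_n) (p : coeffs r) (k : 'I_n) :
  shaped p -> shaped (mut_coeff B p k).
Proof.
move=> hp i; have [w [eps [heps hw hpi]]] := hp i.
rewrite /shaped_row /mut_coeff; case: eqVneq => [_ | _].
  exists (fun a => - w a), (- eps); split.
  - by case: heps => ->; [right | left].
  - by move=> a b hab; rewrite (hw _ _ hab).
  - by move=> j a; rewrite hpi opprD mulNr.
pose q a := if 0 < beta r B i k then pk_minus p k a else pk_plus p k a.
have hq : block_const q.
  rewrite {}/q; case: (0 < _).
  - exact: block_const_pk_minus.
  - exact: block_const_pk_plus.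
exists (fun a => w a + beta r B k i * q a), eps; split => //.
  by move=> a b hab; rewrite (hw _ _ hab) (hq _ _ hab).
by move=> j a; rewrite /q hpi; case: ifP => _; rewrite addrAC.
Qed.

Lemma shaped_seed_at (B : 'M[int]_n) (p : coeffs r) (ks : seq 'I_n) :
  shaped p -> shaped (seed_at B p ks).2.
Proof.
rewrite /seed_at; elim: ks B p => [|k ks IH] B p hp //=.
by apply: IH; apply: shaped_mut.
Qed.

End Shape.

Theorem mainTheorem4 (n : nat) (r : 'I_n -> nat) (B0 : 'M[int]_n)
  (hr : forall i, (0 < r i)%N)
  (hskew : skew_symmetrizable B0)
  (hdiv : forall i j : 'I_n, ((r j)%:Z %| B0 i j)%Z)
  (ks : seq 'I_n) :
  (forall (i k : 'I_n), i != k ->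
     forall (l l' : 'I_(r k)) (j j' : 'I_(r i)),
       @Cmat n r B0 ks i (@idx n r k l) j = @Cmat n r B0 ks i (@idx n r k l') j')
  /\
  (forall i : 'I_n, exists c : int, exists eps : int,
     (eps = 1 \/ eps = -1) /\
     (forall l : 'I_(r i), @Cmat n r B0 ks i (@idx n r i l) l = c + eps) /\
     (forall l j : 'I_(r i), l != j -> @Cmat n r B0 ks i (@idx n r i l) j = c)).
Proof.
have hshape := shaped_seed_at B0 ks (principal_shaped r).
rewrite /Cmat; split=> [i k nik l l' j j' | i].
  have [w [eps [_ hw hpi]]] := hshape i.
  rewrite !hpi /principal /= eq_sym (negbTE nik) /= !mulr0 !addr0.
  exact: hw.
have [w [eps [heps hw hpi]]] := hshape i.
pose l0 := idx (Ordinal (hr i)).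
exists (w l0), eps; split; first exact: heps.
split=> [l | l j nelj]; rewrite hpi /principal /= eqxx /=.
  by rewrite eqxx mulr1 (hw _ l0).
by rewrite (inj_eq val_inj) (negbTE nelj) mulr0 addr0 (hw _ l0).
Qed.
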